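(* For every formula $\varphi$: $\emptyset\vdash_{\mathsf{iSLH}}\varphi$ if and only if the sequent $\Rightarrow\varphi$ (empty antecedent) is provable in $\mathsf{G4iSLt}$.
   Context: Formulas are built by the grammar $\varphi ::= p \mid \bot \mid \varphi\land\varphi \mid \varphi\lor\varphi \mid \varphi\to\varphi \mid \Box\varphi$, with $p$ ranging over a countably infinite set of propositional variables. For a multiset $\Gamma$, $\Box\Gamma=\{\Box\psi:\psi\in\Gamma\}$; a boxed formula is one of the form $\Box\psi$. The generalised Hilbert calculus $\mathsf{iSLH}$ derives expressions $\Gamma\vdash\varphi$ ($\Gamma$ a set of formulas) by the rules: (Ax) $\Gamma\vdash\varphi$ whenever $\varphi$ is an instance of an axiom; (El) $\Gamma\vdash\varphi$ whenever $\varphi\in\Gamma$; (Nec) from $\emptyset\vdash\varphi$ infer $\Gamma\vdash\Box\varphi$; (MP) from $\Gamma\vdash\varphi$ and $\Gamma\vdash\varphi\to\psi$ infer $\Gamma\vdash\psi$. The axioms are all instances of: $\varphi\to(\psi\to\varphi)$; $(\varphi\to(\psi\to\chi))\to((\varphi\to\psi)\to(\varphi\to\chi))$; $\varphi\to(\varphi\lor\psi)$; $\psi\to(\varphi\lor\psi)$; $(\varphi\to\chi)\to((\psi\to\chi)\to((\varphi\lor\psi)\to\chi))$; $(\varphi\land\psi)\to\varphi$; $(\varphi\land\psi)\to\psi$; $(\varphi\to\psi)\to((\varphi\to\chi)\to(\varphi\to(\psi\land\chi)))$; $\bot\to\varphi$; $\Box(\varphi\to\psi)\to(\Box\varphi\to\Box\psi)$;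 $(\Box\varphi\to\varphi)\to\varphi$. A sequent is $\Gamma\Rightarrow\chi$ with $\Gamma$ a finite multiset of formulas and $\chi$ a formula. The sequent calculus $\mathsf{G4iSLt}$ has the following rules, where $p$ is a propositional variable and $\Phi$ always denotes a multiset containing no boxed formula: (⊥L) $\bot,\Gamma\Rightarrow\chi$ (no premise); (IdP) $\Gamma,p\Rightarrow p$ (no premise); (∧L) from $\Gamma,\varphi,\psi\Rightarrow\chi$ infer $\Gamma,\varphi\land\psi\Rightarrow\chi$; (∧R) from $\Gamma\Rightarrow\varphi$ and $\Gamma\Rightarrow\psi$ infer $\Gamma\Rightarrow\varphi\land\psi$; (∨L) from $\Gamma,\varphi\Rightarrow\chi$ and $\Gamma,\psi\Rightarrow\chi$ infer $\Gamma,\varphi\lor\psi\Rightarrow\chi$; (∨R$_i$), $i\in\{1,2\}$: from $\Gamma\Rightarrow\varphi_i$ infer $\Gamma\Rightarrow\varphi_1\lor\varphi_2$; (p→L) from $\Gamma,p,\varphi\Rightarrow\chi$ infer $\Gamma,p,p\to\varphi\Rightarrow\chi$; (→R) from $\Gamma,\varphi\Rightarrow\psi$ infer $\Gamma\Rightarrow\varphi\to\psi$; (□→L) from $\Phi,\Gamma,\psi,\Box\varphi\Rightarrow\varphi$ and $\Phi,\Box\Gamma,\psi\Rightarrow\chi$ infer $\Phi,\Box\Gamma,\Box\varphi\to\psi\Rightarrow\chi$; (SLtR) from $\Phi,\Gamma,\Box\varphi\Rightarrow\varphi$ infer $\Phi,\Box\Gamma\Rightarrow\Box\varphi$; (∧→L)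 from $\Gamma,\varphi\to(\psi\to\chi)\Rightarrow\delta$ infer $\Gamma,(\varphi\land\psi)\to\chi\Rightarrow\delta$; (∨→L) from $\Gamma,\varphi\to\chi,\psi\to\chi\Rightarrow\delta$ infer $\Gamma,(\varphi\lor\psi)\to\chi\Rightarrow\delta$; (→→L) from $\Gamma,\psi\to\chi\Rightarrow\varphi\to\psi$ and $\Gamma,\chi\Rightarrow\delta$ infer $\Gamma,(\varphi\to\psi)\to\chi\Rightarrow\delta$. A proof of a sequent $S$ is a finite tree of sequents with root $S$ in which each interior node together with its children forms an instance of a rule (conclusion, premises) and each leaf is the conclusion of a premise-free rule; $S$ is provable if it has a proof. *)

From Stdlib Require Export List Permutation.
Export ListNotations.

Inductive form : Type :=
| Var : nat -> form
| Bot : form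
| And : form -> form -> form
| Or  : form -> form -> form
| Imp : form -> form -> form
| Box : form -> form.

Inductive is_axiom : form -> Prop :=
| A1 : forall p q, is_axiom (Imp p (Imp q p))
| A2 : forall p q r,
    is_axiom (Imp (Imp p (Imp q r)) (Imp (Imp p q) (Imp p r)))
| A3 : forall p q, is_axiom (Imp p (Or p q))
| A4 : forall p q, is_axiom (Imp q (Or p q))
| A5 : forall p q r,
    is_axiom (Imp (Imp p r) (Imp (Imp q r) (Imp (Or p q) r)))
| A6 : forall p q, is_axiom (Imp (And p q) p)
| A7 : forall p q, is_axiom (Imp (And p q) q)
| A8 : forall p q r,
    is_axiom (Imp (Imp p q) (Imp (Imp p r) (Imp p (And q r))))
| A9 : forall p, is_axiom (Imp Bot p)
| AK : forall p q, is_axiom (Imp (Box (Imp p q)) (Imp (Box p) (Box q)))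
| ASL : forall p, is_axiom (Imp (Imp (Box p) p) p).

Definition empty_set : form -> Prop := fun _ => False.

Inductive iSLH : (form -> Prop) -> form -> Prop :=
| H_Ax : forall (G : form -> Prop) p, is_axiom p -> iSLH G p
| H_El : forall (G : form -> Prop) p, G p -> iSLH G p
| H_Nec : forall (G : form -> Prop) p, iSLH empty_set p -> iSLH G (Box p)
| H_MP : forall (G : form -> Prop) p q,
    iSLH G p -> iSLH G (Imp p q) -> iSLH G q.

(* Sequent calculus G4iSLt.  A multiset antecedent is represented by a *)
(* list; every rule's conclusion is matched up to permutation, so that *)
(* lists related by Permutation denote the same multiset.              *)

Definition is_boxed (f : form) : Prop :=
  match f with Box _ => True | _ => False end.

Definition no_boxed (Phi : list form) : Prop :=
  forall f, In f Phi -> ~ is_boxed f.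

Inductive G4iSLt : list form -> form -> Prop :=
| BotL : forall G G' c,
    Permutation G' (Bot :: G) -> G4iSLt G' c
| IdP : forall G G' n,
    Permutation G' (Var n :: G) -> G4iSLt G' (Var n)
| AndL : forall G G' a b c,
    Permutation G' (And a b :: G) ->
    G4iSLt (a :: b :: G) c -> G4iSLt G' c
| AndR : forall G a b,
    G4iSLt G a -> G4iSLt G b -> G4iSLt G (And a b)
| OrL : forall G G' a b c,
    Permutation G' (Or a b :: G) ->
    G4iSLt (a :: G) c -> G4iSLt (b :: G) c -> G4iSLt G' c
| OrR1 : forall G a b, G4iSLt G a -> G4iSLt G (Or a b)
| OrR2 : forall G a b, G4iSLt G b -> G4iSLt G (Or a b)
| PImpL : forall G G' n a c,
    Permutation G' (Var n :: Imp (Var n) a :: G) ->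
    G4iSLt (Var n :: a :: G) c -> G4iSLt G' c
| ImpR : forall G a b, G4iSLt (a :: G) b -> G4iSLt G (Imp a b)
| BoxImpL : forall Phi G G' a b c,
    no_boxed Phi ->
    Permutation G' (Phi ++ map Box G ++ [Imp (Box a) b]) ->
    G4iSLt (Phi ++ G ++ [b; Box a]) a ->
    G4iSLt (Phi ++ map Box G ++ [b]) c ->
    G4iSLt G' c
| SLtR : forall Phi G G' a,
    no_boxed Phi ->
    Permutation G' (Phi ++ map Box G) ->
    G4iSLt (Phi ++ G ++ [Box a]) a ->
    G4iSLt G' (Box a)
| AndImpL : forall G G' a b c d,
    Permutation G' (Imp (And a b) c :: G) ->
    G4iSLt (Imp a (Imp b c) :: G) d -> G4iSLt G' d
| OrImpL : forall G G' a b c d,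
    Permutation G' (Imp (Or a b) c :: G) ->
    G4iSLt (Imp a c :: Imp b c :: G) d -> G4iSLt G' d
| ImpImpL : forall G G' a b c d,
    Permutation G' (Imp (Imp a b) c :: G) ->
    G4iSLt (Imp b c :: G) (Imp a b) ->
    G4iSLt (c :: G) d -> G4iSLt G' d.

(** - Soundness of G4iSLt: every provable sequent [G => c] gives an iSLH
      derivation of [c] from the members of [G].  Beyond the deduction
      theorem, the key derived principles are the completeness principle
      [phi -> Box phi] and a Löb rule, which justify the two modal rules.

    - Completeness of G4iSLt, semantically.  iSLH is sound for finite tree
      models whose modal relation is strict, contained in the intuitionistic
      order and composes with it (strong Löb holds by induction on height).
      Conversely, by induction on an exponential weight, every sequent is
      either provable or refuted by such a model: invertible rules reduce the
      sequent, and an irreducible unprovable sequent is refuted by a root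
      placed above countermodels of the premises of the non-invertible rules.
      A theorem of iSLH is valid, so [=> phi] has no countermodel and is
      therefore provable. *)

From Stdlib Require Import Classical Lia Arith.

Definition ctx (l : list form) : form -> Prop := fun x => In x l.
Definition extend (G : form -> Prop) (A : form) : form -> Prop := fun x => x = A \/ G x.

Lemma iSLH_mono : forall G p, iSLH G p ->
  forall G', (forall x, G x -> G' x) -> iSLH G' p.
Proof.
  induction 1; intros G' HG.
  - apply H_Ax; auto.
  - apply H_El; auto.
  - apply H_Nec; auto.
  - eapply H_MP; eauto.
Qed.

Lemma iSLH_cut : forall G p, iSLH G p ->
  forall G', (forall x, G x -> iSLH G' x) -> iSLH G' p.
Proof.
  induction 1; intros G' HG.
  - apply H_Ax; auto.
  - auto.
  - apply H_Nec; auto.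
  - eapply H_MP; eauto.
Qed.

Lemma iSLH_imp_refl : forall G A, iSLH G (Imp A A).
Proof.
  intros G A.
  apply H_MP with (p := Imp A (Imp A A)); [apply H_Ax, A1|].
  apply H_MP with (p := Imp A (Imp (Imp A A) A)); [apply H_Ax, A1|apply H_Ax, A2].
Qed.

(** The deduction theorem; necessitation only applies to theorems, so it is
    unaffected by the discharged assumption. *)
Lemma deduction : forall G A p, iSLH (extend G A) p -> iSLH G (Imp A p).
Proof.
  intros G A p H. remember (extend G A) as GA eqn:HGA. induction H; subst.
  - apply H_MP with (p := p); [apply H_Ax; auto | apply H_Ax, A1].
  - destruct H as [->|Hp]; [apply iSLH_imp_refl|].
    apply H_MP with (p := p); [apply H_El; auto | apply H_Ax, A1].
  - apply H_MP with (p := Box p); [apply H_Nec; auto | apply H_Ax, A1].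
  - apply H_MP with (p := Imp A p); [auto|].
    apply H_MP with (p := Imp A (Imp p q)); [auto | apply H_Ax, A2].
Qed.

Lemma iSLH_K : forall G a b,
  iSLH G (Box (Imp a b)) -> iSLH G (Box a) -> iSLH G (Box b).
Proof.
  intros G a b Hab Ha. apply H_MP with (p := Box a); auto.
  apply H_MP with (p := Box (Imp a b)); [auto | apply H_Ax, AK].
Qed.

Lemma iSLH_and_intro : forall G a b, iSLH G a -> iSLH G b -> iSLH G (And a b).
Proof.
  intros G a b Ha Hb.
  assert (Hk : forall x, iSLH G x -> iSLH G (Imp (Imp Bot Bot) x)).
  { intros x Hx. apply H_MP with (p := x); [auto | apply H_Ax, A1]. }
  apply H_MP with (p := Imp Bot Bot); [apply H_Ax, A9|].
  apply H_MP with (p := Imp (Imp Bot Bot) b); [auto|].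
  apply H_MP with (p := Imp (Imp Bot Bot) a); [auto | apply H_Ax, A8].
Qed.

Lemma iSLH_and_elim1 : forall G a b, iSLH G (And a b) -> iSLH G a.
Proof. intros. eapply H_MP; [eauto | apply H_Ax, A6]. Qed.

Lemma iSLH_and_elim2 : forall G a b, iSLH G (And a b) -> iSLH G b.
Proof. intros. eapply H_MP; [eauto | apply H_Ax, A7]. Qed.

(** The completeness principle [phi -> Box phi], derived from the strong Löb
    axiom applied to [phi /\ Box phi]. *)
Lemma iSLH_CP : forall G phi, iSLH G (Imp phi (Box phi)).
Proof.
  intros G phi. apply deduction.
  set (th := And phi (Box phi)).
  apply iSLH_and_elim2 with (a := phi).
  apply H_MP with (p := Imp (Box th) th); [|apply H_Ax, ASL].
  apply deduction. apply iSLH_and_intro.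
  - apply H_El. right; left; auto.
  - apply iSLH_K with (a := th); [apply H_Nec, H_Ax, A6 | apply H_El; left; auto].
Qed.

Lemma iSLH_box : forall G phi, iSLH G phi -> iSLH G (Box phi).
Proof. intros. eapply H_MP; [eauto | apply iSLH_CP]. Qed.

Lemma iSLH_box_ctx : forall D x, iSLH (ctx D) x -> iSLH (ctx (map Box D)) (Box x).
Proof.
  induction D as [|y D IH]; intros x H.
  - apply H_Nec. eapply iSLH_mono; [exact H|]. intros z [].
  - assert (Hyx : iSLH (ctx D) (Imp y x)).
    { apply deduction. eapply iSLH_mono; [exact H|]. intros z [Hz|Hz]; red; auto. }
    apply IH in Hyx. apply iSLH_K with (a := y).
    + eapply iSLH_mono; [exact Hyx|]. intros z Hz; right; auto.
    + apply H_El. left; auto.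
Qed.

Lemma iSLH_lob_rule : forall G L a, iSLH (ctx L) a ->
  (forall x, In x L -> iSLH (extend G (Box (Box a))) (Box x)) ->
  iSLH G (Box a).
Proof.
  intros G L a Ha HL.
  apply H_MP with (p := Imp (Box (Box a)) (Box a)); [|apply H_Ax, ASL].
  apply deduction. apply (iSLH_cut _ _ (iSLH_box_ctx _ _ Ha)).
  intros x Hx. apply in_map_iff in Hx. destruct Hx as [y [<- Hy]]. auto.
Qed.

Lemma perm_ctx : forall G' L x, Permutation G' L -> In x L -> ctx G' x.
Proof. intros G' L x HP Hx. eapply Permutation_in; [apply Permutation_sym|]; eauto. Qed.

Lemma in_ctx : forall G' L x, Permutation G' L -> In x L -> iSLH (ctx G') x.
Proof. intros. apply H_El. eapply perm_ctx; eauto. Qed.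

Lemma deduction_ctx : forall G a p, iSLH (ctx (a :: G)) p -> iSLH (ctx G) (Imp a p).
Proof.
  intros G a p H. apply deduction. eapply iSLH_mono; [exact H|].
  intros x [Hx|Hx]; red; auto.
Qed.

Lemma iSLH_or_elim : forall D a b c, iSLH D (Or a b) ->
  iSLH D (Imp a c) -> iSLH D (Imp b c) -> iSLH D c.
Proof.
  intros D a b c Hab Ha Hb. apply H_MP with (p := Or a b); [auto|].
  apply H_MP with (p := Imp b c); [auto|].
  apply H_MP with (p := Imp a c); [auto | apply H_Ax, A5].
Qed.

Lemma left_rule_sound : forall G G' K L c, Permutation G' (K ++ G) ->
  (forall y, In y L -> iSLH (ctx G') y) -> iSLH (ctx (L ++ G)) c -> iSLH (ctx G') c.
Proof.
  intros G G' K L c HP HL Hc. apply (iSLH_cut _ _ Hc).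
  intros y Hy. apply in_app_iff in Hy as [Hy|Hy]; auto.
  apply (in_ctx _ _ _ HP). apply in_app_iff; auto.
Qed.

Ltac member := rewrite ?in_app_iff; simpl; intuition auto using in_map.

(** The right modal rule is sound: it is an instance of the Löb rule, the
    non-boxed assumptions being boxed by the completeness principle. *)
Lemma SLtR_sound : forall Phi G G' a, Permutation G' (Phi ++ map Box G) ->
  iSLH (ctx (Phi ++ G ++ [Box a])) a -> iSLH (ctx G') (Box a).
Proof.
  intros Phi G G' a HP Ha. apply (iSLH_lob_rule _ _ _ Ha).
  intros x Hx. apply in_app_iff in Hx as [Hx|[Hx|[<-|[]]]%in_app_iff].
  - apply iSLH_box. eapply iSLH_mono; [apply (in_ctx _ _ _ HP); member|]. intros; right; auto.
  - eapply iSLH_mono; [apply (in_ctx _ _ _ HP); member|]. intros; right; auto.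
  - apply H_El; left; auto.
Qed.

(** The left modal rule is sound: its first premise gives [Box a] by the
    Löb rule, hence [b], which discharges the second premise. *)
Lemma BoxImpL_sound : forall Phi G G' a b c,
  Permutation G' (Phi ++ map Box G ++ [Imp (Box a) b]) ->
  iSLH (ctx (Phi ++ G ++ [b; Box a])) a ->
  iSLH (ctx (Phi ++ map Box G ++ [b])) c -> iSLH (ctx G') c.
Proof.
  intros Phi G G' a b c HP Ha Hc.
  assert (Hab : iSLH (ctx G') (Imp (Box a) b)) by (apply (in_ctx _ _ _ HP); member).
  assert (Hba : iSLH (ctx G') (Box a)).
  { apply (iSLH_lob_rule _ _ _ Ha). intros x Hx.
    assert (Hlift : forall y, iSLH (ctx G') y -> iSLH (extend (ctx G') (Box (Box a))) y)
      by (intros y Hy; eapply iSLH_mono; [exact Hy | intros; right; auto]).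
    apply in_app_iff in Hx as [Hx|[Hx|[<-|[<-|[]]]]%in_app_iff].
    - apply Hlift, iSLH_box, (in_ctx _ _ _ HP). member.
    - apply Hlift, (in_ctx _ _ _ HP). member.
    - apply iSLH_K with (a := Box a); [apply Hlift, iSLH_box, Hab | apply H_El; left; auto].
    - apply H_El; left; auto. }
  apply (iSLH_cut _ _ Hc). intros x Hx.
  apply in_app_iff in Hx as [Hx|[Hx|[<-|[]]]%in_app_iff].
  - apply (in_ctx _ _ _ HP). member.
  - apply (in_ctx _ _ _ HP). member.
  - eapply H_MP; eauto.
Qed.

(** The left rules for implications with compound antecedents are sound:
    their new assumptions are intuitionistic consequences of the principal
    formula (and, for ->->L, of the first premise). *)
Lemma AndImpL_sound : forall G G' a b c d, Permutation G' (Imp (And a b) c :: G) ->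
  iSLH (ctx (Imp a (Imp b c) :: G)) d -> iSLH (ctx G') d.
Proof.
  intros G G' a b c d H Hd.
  apply (left_rule_sound _ _ [Imp (And a b) c] [Imp a (Imp b c)] _ H); auto.
  intros y [<-|[]]. apply deduction, deduction.
  apply H_MP with (p := And a b).
  - apply iSLH_and_intro; apply H_El; [right; left | left]; auto.
  - apply H_El; right; right. eapply perm_ctx; [exact H | member].
Qed.

Lemma OrImpL_sound : forall G G' a b c d, Permutation G' (Imp (Or a b) c :: G) ->
  iSLH (ctx (Imp a c :: Imp b c :: G)) d -> iSLH (ctx G') d.
Proof.
  intros G G' a b c d H Hd.
  apply (left_rule_sound _ _ [Imp (Or a b) c] [Imp a c; Imp b c] _ H); auto.
  assert (Hprin : forall x, iSLH (extend (ctx G') x) (Imp (Or a b) c)).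
  { intros x. apply H_El; right. eapply perm_ctx; [exact H | member]. }
  intros y [<-|[<-|[]]]; apply deduction.
  - apply H_MP with (p := Or a b); [|apply Hprin].
    apply H_MP with (p := a); [apply H_El; left; auto | apply H_Ax, A3].
  - apply H_MP with (p := Or a b); [|apply Hprin].
    apply H_MP with (p := b); [apply H_El; left; auto | apply H_Ax, A4].
Qed.

Lemma ImpImpL_sound : forall G G' a b c d, Permutation G' (Imp (Imp a b) c :: G) ->
  iSLH (ctx (Imp b c :: G)) (Imp a b) -> iSLH (ctx (c :: G)) d -> iSLH (ctx G') d.
Proof.
  intros G G' a b c d H Hab Hd.
  assert (Hprin : iSLH (ctx G') (Imp (Imp a b) c)) by (apply (in_ctx _ _ _ H); member).
  assert (Hbc : iSLH (ctx G') (Imp b c)).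
  { apply deduction. apply H_MP with (p := Imp a b).
    - apply H_MP with (p := b); [apply H_El; left; auto | apply H_Ax, A1].
    - eapply iSLH_mono; [exact Hprin | intros; right; auto]. }
  assert (Hab' : iSLH (ctx G') (Imp a b)).
  { apply (left_rule_sound _ _ [Imp (Imp a b) c] [Imp b c] _ H); auto.
    intros y [<-|[]]; auto. }
  apply (left_rule_sound _ _ [Imp (Imp a b) c] [c] _ H); auto.
  intros y [<-|[]]. eapply H_MP; eauto.
Qed.

Lemma G4iSLt_sound : forall G c, G4iSLt G c -> iSLH (ctx G) c.
Proof.
  induction 1.
  - apply H_MP with (p := Bot); [apply (in_ctx _ _ _ H); member | apply H_Ax, A9].
  - apply (in_ctx _ _ _ H). member.
  - apply (left_rule_sound _ _ [And a b] [a; b] _ H); auto.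
    assert (Hab : iSLH (ctx G') (And a b)) by (apply (in_ctx _ _ _ H); member).
    intros y [<-|[<-|[]]]; [eapply iSLH_and_elim1 | eapply iSLH_and_elim2]; eauto.
  - apply iSLH_and_intro; auto.
  - assert (Htail : forall p, iSLH (ctx G) p -> iSLH (ctx G') p).
    { intros p Hp. eapply iSLH_mono; [exact Hp|]. intros x Hx. eapply perm_ctx; [exact H|].
      right; auto. }
    apply iSLH_or_elim with a b; [apply (in_ctx _ _ _ H); member | |];
      apply Htail, deduction_ctx; auto.
  - apply H_MP with (p := a); [auto | apply H_Ax, A3].
  - apply H_MP with (p := b); [auto | apply H_Ax, A4].
  - apply (left_rule_sound _ _ [Var n; Imp (Var n) a] [Var n; a] _ H); auto.
    intros y [<-|[<-|[]]]; [|apply H_MP with (p := Var n)]; apply (in_ctx _ _ _ H); member.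
  - apply deduction_ctx; auto.
  - eapply BoxImpL_sound; eauto.
  - eapply SLtR_sound; eauto.
  - eapply AndImpL_sound; eauto.
  - eapply OrImpL_sound; eauto.
  - eapply ImpImpL_sound; eauto.
Qed.

(** A node carries the variables true at it
    and a list of children; an edge labelled [true] is modal.  The
    intuitionistic order is the descendant relation, and [u] is modally
    accessible from [t] when the path from [t] down to [u] passes through a
    modal edge.  The modal relation is thus strict, contained in the order,
    and closed under composition with the order on both sides. *)
Inductive tree : Type := Node : list nat -> list (bool * tree) -> tree.

Definition atoms (t : tree) : list nat := match t with Node l _ => l end.
Definition children (t : tree) : list (bool * tree) := match t with Node _ k => k end.
Definition child (t c : tree) : Prop := exists b, In (b, c) (children t).

Inductive desc : tree -> tree -> Prop :=
| desc_refl : forall t, desc t t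
| desc_step : forall t c u, child t c -> desc c u -> desc t u.

Inductive modal : tree -> tree -> Prop :=
| modal_edge : forall t c u, In (true, c) (children t) -> desc c u -> modal t u
| modal_below : forall t b c u, In (b, c) (children t) -> modal c u -> modal t u.

Fixpoint force (t : tree) (A : form) {struct A} : Prop :=
  match A with
  | Var n => In n (atoms t)
  | Bot => False
  | And a b => force t a /\ force t b
  | Or a b => force t a \/ force t b
  | Imp a b => forall u, desc t u -> force u a -> force u b
  | Box a => forall u, modal t u -> force u a
  end.

Definition monotone (t : tree) : Prop := forall u c, desc t u -> child u c ->
  forall n, In n (atoms u) -> In n (atoms c).

Fixpoint height (t : tree) : nat :=
  match t with Node _ ks => S (list_max (map (fun k => height (snd k)) ks)) end.

Lemma height_child : forall t c, child t c -> height c < height t.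
Proof.
  intros [l ks] c [b Hin]. simpl in *.
  assert (Hle : height c <= list_max (map (fun k => height (snd k)) ks)).
  { set (hs := map (fun k => height (snd k)) ks).
    assert (Hall := proj1 (list_max_le hs _) (le_n _)). rewrite Forall_forall in Hall.
    apply Hall, in_map_iff. exists (b, c); auto. }
  lia.
Qed.

Lemma desc_trans : forall t u v, desc t u -> desc u v -> desc t v.
Proof. induction 1; intros; auto. eapply desc_step; eauto. Qed.

Lemma desc_height : forall t u, desc t u -> height u <= height t.
Proof. induction 1; auto. apply height_child in H. lia. Qed.

Lemma modal_strict : forall t u, modal t u -> exists c, child t c /\ desc c u.
Proof.
  induction 1 as [t c u Hin Hd|t b c u Hin _ [c' [Hc Hd]]].
  - exists c; split; auto. exists true; auto.
  - exists c; split; [exists b; auto | eapply desc_step; eauto].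
Qed.

Lemma modal_desc : forall t u, modal t u -> desc t u.
Proof. intros t u H. destruct (modal_strict _ _ H) as [c [Hc Hd]]. eapply desc_step; eauto. Qed.

Lemma modal_height : forall t u, modal t u -> height u < height t.
Proof.
  intros t u H. destruct (modal_strict _ _ H) as [c [Hc Hd]].
  apply height_child in Hc. apply desc_height in Hd. lia.
Qed.

Lemma desc_modal : forall t u v, desc t u -> modal u v -> modal t v.
Proof. induction 1; intros; auto. destruct H as [b Hb]. eapply modal_below; eauto. Qed.

Lemma monotone_desc : forall t u, monotone t -> desc t u -> monotone u.
Proof. intros t u H Hd v c Hv. apply H. eapply desc_trans; eauto. Qed.

Lemma atoms_desc : forall t u, monotone t -> desc t u ->
  forall n, In n (atoms t) -> In n (atoms u).
Proof.
  intros t u Hm Hd. induction Hd as [|t c u Hc Hd IH]; intros n Hn; auto.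
  apply IH; [eapply monotone_desc; eauto; eapply desc_step; eauto; constructor|].
  eapply Hm; eauto. constructor.
Qed.

Lemma persist : forall A t u, monotone t -> desc t u -> force t A -> force u A.
Proof.
  induction A; simpl; intros t u Hm Hd H; auto.
  - eapply atoms_desc; eauto.
  - destruct H; split; eauto.
  - destruct H; [left|right]; eauto.
  - intros v Hv. apply H. eapply desc_trans; eauto.
  - intros v Hv. apply H. eapply desc_modal; eauto.
Qed.

(** The completeness principle holds because the modal relation is contained
    in the order. *)
Lemma force_box_of : forall A t, monotone t -> force t A -> force t (Box A).
Proof. simpl; intros. eapply persist; eauto. apply modal_desc; auto. Qed.

Definition valid (A : form) : Prop := forall t, monotone t -> force t A.

(** Strong Löb holds because the modal relation is converse well-founded:
    induction on the height of the node. *)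
Lemma force_strong_lob : forall p t, monotone t -> force t (Imp (Imp (Box p) p) p).
Proof.
  intros p t0 Ht0.
  assert (Hh : forall n t, height t < n -> monotone t ->
            force t (Imp (Box p) p) -> force t p).
  { induction n as [|n IH]; intros t Ht Hm H; [lia|].
    apply H; [constructor|]. intros u Hu.
    assert (Htu := modal_desc _ _ Hu).
    apply IH; [apply modal_height in Hu; lia | eapply monotone_desc; eauto|].
    eapply persist; eauto. }
  intros u Hu H. apply (Hh (S (height u))); auto. eapply monotone_desc; eauto.
Qed.

Lemma axiom_valid : forall p, is_axiom p -> valid p.
Proof.
  intros p Hp t Ht. destruct Hp; simpl.
  - intros u Hu Hp v Hv _. apply (persist p u v); auto. eapply monotone_desc; eauto.
  - intros u Hu H1 v Hv H2 w Hw Hp.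
    apply (H1 w (desc_trans _ _ _ Hv Hw) Hp w (desc_refl _)). apply H2; auto.
  - intros; auto.
  - intros; auto.
  - intros u Hu H1 v Hv H2 w Hw [H3|H3].
    + apply H1; auto. eapply desc_trans; eauto.
    + apply H2; auto.
  - intros u Hu [H1 H2]; auto.
  - intros u Hu [H1 H2]; auto.
  - intros u Hu H1 v Hv H2 w Hw H3. split.
    + apply H1; auto. eapply desc_trans; eauto.
    + apply H2; auto.
  - intros u Hu [].
  - intros u Hu H1 v Hv H2 w Hw. apply (H1 w); auto.
    eapply desc_modal; eauto. constructor.
  - apply force_strong_lob; auto.
Qed.

Lemma iSLH_sound : forall G p, iSLH G p -> (forall x, G x -> valid x) -> valid p.
Proof.
  induction 1; intros HG.
  - apply axiom_valid; auto.
  - auto.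
  - intros t Ht u Hu. apply IHiSLH; [intros x []|]. eapply monotone_desc; eauto.
    apply modal_desc; auto.
  - intros t Ht. apply (IHiSLH2 HG t Ht t (desc_refl t)). apply IHiSLH1; auto.
Qed.

(** Exponential weight of a sequent: the premises of every rule used in the
    countermodel search below are strictly lighter than the conclusion. *)
Fixpoint weight (A : form) : nat :=
  match A with
  | Var _ => 1 | Bot => 1
  | And a b => weight a + weight b + 2
  | Or a b => weight a + weight b + 1
  | Imp a b => weight a + weight b + 1
  | Box a => weight a + 1
  end.

Fixpoint list_weight (l : list form) : nat :=
  match l with [] => 0 | A :: r => 4 ^ weight A + list_weight r end.

Definition seq_weight (G : list form) (c : form) : nat := list_weight G + 4 ^ S (weight c).

Lemma weight_pos : forall A, 1 <= weight A.
Proof. destruct A; simpl; lia. Qed.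

Lemma list_weight_app : forall l1 l2, list_weight (l1 ++ l2) = list_weight l1 + list_weight l2.
Proof. induction l1; simpl; intros; auto. rewrite IHl1; lia. Qed.

Lemma list_weight_perm : forall l l', Permutation l l' -> list_weight l = list_weight l'.
Proof. induction 1; simpl; lia. Qed.

Lemma list_weight_box : forall l, list_weight l <= list_weight (map Box l).
Proof.
  induction l as [|a l IH]; simpl; auto.
  assert (4 ^ weight a <= 4 ^ (weight a + 1)) by (apply Nat.pow_le_mono_r; lia). lia.
Qed.

Lemma pow4_sum3_lt : forall m n k W, m < W -> n < W -> k < W -> 4 ^ m + 4 ^ n + 4 ^ k < 4 ^ W.
Proof.
  intros m n k [|W] Hm Hn Hk; [lia|].
  assert (Hle : forall i, i < S W -> 4 ^ i <= 4 ^ W) by (intros; apply Nat.pow_le_mono_r; lia).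
  pose proof (Hle m Hm). pose proof (Hle n Hn). pose proof (Hle k Hk).
  pose proof (Nat.pow_nonzero 4 W). simpl. lia.
Qed.

Lemma pow4_sum2_lt : forall m n W, m < W -> n < W -> 4 ^ m + 4 ^ n < 4 ^ W.
Proof. intros. pose proof (pow4_sum3_lt m n m W). lia. Qed.

Lemma pow4_lt : forall m W, m < W -> 4 ^ m < 4 ^ W.
Proof. intros. pose proof (pow4_sum3_lt m m m W). lia. Qed.

Fixpoint nonboxed (l : list form) : list form :=
  match l with [] => [] | Box _ :: r => nonboxed r | A :: r => A :: nonboxed r end.
Fixpoint unboxed (l : list form) : list form :=
  match l with [] => [] | Box a :: r => a :: unboxed r | _ :: r => unboxed r end.

Lemma nonboxed_perm : forall l, Permutation l (nonboxed l ++ map Box (unboxed l)).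
Proof.
  induction l as [|a l IH]; simpl; auto.
  destruct a; simpl; auto.
  eapply Permutation_trans; [apply perm_skip, IH | apply Permutation_middle].
Qed.

Lemma nonboxed_no_boxed : forall l, no_boxed (nonboxed l).
Proof.
  intros l f. induction l as [|a l IH]; simpl; [tauto|].
  destruct a; simpl; auto; intros [<-|Hf]; simpl; auto.
Qed.

Lemma in_nonboxed : forall l X, In X l -> ~ is_boxed X -> In X (nonboxed l).
Proof.
  induction l as [|a l IH]; simpl; intros X H1 H2; [tauto|].
  destruct H1 as [->|H1].
  - destruct X; simpl; auto. destruct H2; simpl; auto.
  - destruct a; simpl; auto.
Qed.

Lemma in_unboxed : forall l a, In (Box a) l -> In a (unboxed l).
Proof.
  induction l as [|x l IH]; simpl; intros a H; [tauto|].
  destruct H as [->|H]; simpl; auto. destruct x; simpl; auto.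
Qed.

Lemma list_weight_split : forall l,
  list_weight l = list_weight (nonboxed l) + list_weight (map Box (unboxed l)).
Proof. intros. rewrite (list_weight_perm _ _ (nonboxed_perm l)) at 1. apply list_weight_app. Qed.

Lemma in_perm : forall (x : form) l, In x l -> exists l0, Permutation l (x :: l0).
Proof.
  intros x l H. apply in_split in H as [l1 [l2 ->]]. exists (l1 ++ l2).
  apply Permutation_sym, Permutation_middle.
Qed.

Fixpoint vars (l : list form) : list nat :=
  match l with [] => [] | Var n :: r => n :: vars r | _ :: r => vars r end.

Lemma vars_iff : forall l n, In n (vars l) <-> In (Var n) l.
Proof.
  induction l as [|a l IH]; simpl; intros; [tauto|].
  destruct a; simpl; rewrite ?IH; split; intros H; intuition (try congruence).
Qed.

Definition countermodel (G : list form) (c : form) : Prop :=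
  exists t, monotone t /\ (forall A, In A G -> force t A) /\ ~ force t c.

Definition decided (G : list form) (c : form) : Prop := G4iSLt G c \/ countermodel G c.

Definition decided_below (G : list form) (c : form) : Prop :=
  forall G' c', seq_weight G' c' < seq_weight G c -> decided G' c'.

Lemma countermodel_transfer : forall P G c d,
  (forall t, monotone t -> (forall A, In A P -> force t A) -> forall A, In A G -> force t A) ->
  (forall t, force t c -> force t d) ->
  countermodel P d -> countermodel G c.
Proof.
  intros P G c d HPG Hcd [t [Hm [HP Hd]]]. exists t. split; [|split]; eauto.
Qed.

Lemma decide_by_premise : forall G c P d, decided_below G c ->
  seq_weight P d < seq_weight G c ->
  (G4iSLt P d -> G4iSLt G c) -> (countermodel P d -> countermodel G c) -> decided G c.
Proof. intros G c P d IH Hlt Hp Hc. destruct (IH P d Hlt); [left|right]; auto. Qed.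

Lemma decide_by_premises : forall G c P1 d1 P2 d2, decided_below G c ->
  seq_weight P1 d1 < seq_weight G c -> seq_weight P2 d2 < seq_weight G c ->
  (G4iSLt P1 d1 -> G4iSLt P2 d2 -> G4iSLt G c) ->
  (countermodel P1 d1 -> countermodel G c) -> (countermodel P2 d2 -> countermodel G c) ->
  decided G c.
Proof.
  intros G c P1 d1 P2 d2 IH Hlt1 Hlt2 Hp Hc1 Hc2.
  destruct (IH P1 d1 Hlt1); [|right; auto].
  destruct (IH P2 d2 Hlt2); [left|right]; auto.
Qed.

Lemma seq_weight_perm : forall G G' c, Permutation G G' -> seq_weight G c = seq_weight G' c.
Proof. intros. unfold seq_weight. rewrite (list_weight_perm _ _ H). auto. Qed.

Ltac weight_lia := unfold seq_weight; cbn [list_weight weight]; lia.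

Lemma decide_and_left : forall G c a b, In (And a b) G -> decided_below G c -> decided G c.
Proof.
  intros G c a b HX IH. destruct (in_perm _ _ HX) as [G0 HP].
  apply (decide_by_premise _ _ (a :: b :: G0) c IH).
  - rewrite (seq_weight_perm _ _ _ HP).
    pose proof (pow4_sum2_lt (weight a) (weight b) (weight a + weight b + 2)). weight_lia.
  - intros H. eapply AndL; eauto.
  - apply countermodel_transfer; auto. intros t _ Hf A HA.
    apply (Permutation_in _ HP) in HA as [<-|HA]; [split|]; apply Hf; simpl; auto.
Qed.

Lemma decide_or_left : forall G c a b, In (Or a b) G -> decided_below G c -> decided G c.
Proof.
  intros G c a b HX IH. destruct (in_perm _ _ HX) as [G0 HP].
  apply (decide_by_premises _ _ (a :: G0) c (b :: G0) c IH).
  - rewrite (seq_weight_perm _ _ _ HP).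
    pose proof (pow4_lt (weight a) (weight a + weight b + 1)). weight_lia.
  - rewrite (seq_weight_perm _ _ _ HP).
    pose proof (pow4_lt (weight b) (weight a + weight b + 1)). weight_lia.
  - intros H1 H2. eapply OrL; eauto.
  - apply countermodel_transfer; auto. intros t _ Hf A HA.
    apply (Permutation_in _ HP) in HA as [<-|HA]; [left|]; apply Hf; simpl; auto.
  - apply countermodel_transfer; auto. intros t _ Hf A HA.
    apply (Permutation_in _ HP) in HA as [<-|HA]; [right|]; apply Hf; simpl; auto.
Qed.

Lemma decide_var_imp_left : forall G c n a,
  In (Var n) G -> In (Imp (Var n) a) G -> decided_below G c -> decided G c.
Proof.
  intros G c n a Hv HX IH. destruct (in_perm _ _ HX) as [G1 HP1].
  assert (Hv1 : In (Var n) G1).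
  { apply (Permutation_in _ HP1) in Hv as [Hv|Hv]; [discriminate|auto]. }
  destruct (in_perm _ _ Hv1) as [G0 HP0].
  assert (HP : Permutation G (Var n :: Imp (Var n) a :: G0)).
  { eapply Permutation_trans; [apply HP1|].
    eapply Permutation_trans; [apply perm_skip, HP0 | apply perm_swap]. }
  apply (decide_by_premise _ _ (Var n :: a :: G0) c IH).
  - rewrite (seq_weight_perm _ _ _ HP).
    pose proof (pow4_lt (weight a) (1 + weight a + 1)). weight_lia.
  - intros H. eapply PImpL; eauto.
  - apply countermodel_transfer; auto. intros t Hm Hf A HA.
    apply (Permutation_in _ HP) in HA as [<-|[<-|HA]]; try (apply Hf; simpl; tauto).
    intros u Hu _. apply (persist a t u); auto. apply Hf; simpl; auto.
Qed.

Lemma decide_and_imp_left : forall G c a b d,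
  In (Imp (And a b) d) G -> decided_below G c -> decided G c.
Proof.
  intros G c a b d HX IH. destruct (in_perm _ _ HX) as [G0 HP].
  apply (decide_by_premise _ _ (Imp a (Imp b d) :: G0) c IH).
  - rewrite (seq_weight_perm _ _ _ HP).
    pose proof (pow4_lt (weight a + (weight b + weight d + 1) + 1)
                        (weight a + weight b + 2 + weight d + 1)). weight_lia.
  - intros H. eapply AndImpL; eauto.
  - apply countermodel_transfer; auto. intros t Hm Hf A HA.
    apply (Permutation_in _ HP) in HA as [<-|HA]; [|apply Hf; simpl; auto].
    intros u Hu [Ha Hb]. apply (Hf _ (or_introl eq_refl) u Hu Ha u (desc_refl u) Hb).
Qed.

Lemma decide_or_imp_left : forall G c a b d,
  In (Imp (Or a b) d) G -> decided_below G c -> decided G c.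
Proof.
  intros G c a b d HX IH. destruct (in_perm _ _ HX) as [G0 HP].
  apply (decide_by_premise _ _ (Imp a d :: Imp b d :: G0) c IH).
  - rewrite (seq_weight_perm _ _ _ HP).
    pose proof (pow4_sum2_lt (weight a + weight d + 1) (weight b + weight d + 1)
                             (weight a + weight b + 1 + weight d + 1)). weight_lia.
  - intros H. eapply OrImpL; eauto.
  - apply countermodel_transfer; auto. intros t Hm Hf A HA.
    apply (Permutation_in _ HP) in HA as [<-|HA]; [|apply Hf; simpl; auto].
    intros u Hu [Ha|Hb].
    + apply (Hf _ (or_introl eq_refl) u Hu Ha).
    + apply (Hf _ (or_intror (or_introl eq_refl)) u Hu Hb).
Qed.

Lemma decide_and_right : forall G a b, decided_below G (And a b) -> decided G (And a b).
Proof.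
  intros G a b IH. apply (decide_by_premises _ _ G a G b IH).
  - pose proof (pow4_lt (S (weight a)) (S (weight a + weight b + 2))). weight_lia.
  - pose proof (pow4_lt (S (weight b)) (S (weight a + weight b + 2))). weight_lia.
  - apply AndR.
  - apply countermodel_transfer; auto. intros t [H _]; auto.
  - apply countermodel_transfer; auto. intros t [_ H]; auto.
Qed.

Lemma decide_imp_right : forall G a b, decided_below G (Imp a b) -> decided G (Imp a b).
Proof.
  intros G a b IH. apply (decide_by_premise _ _ (a :: G) b IH).
  - pose proof (pow4_sum2_lt (weight a) (S (weight b)) (S (weight a + weight b + 1))). weight_lia.
  - apply ImpR.
  - intros [t [Hm [Hf Hn]]]. exists t. split; [auto | split].
    + intros A HA. apply Hf; simpl; auto.
    + intros H. apply Hn, (H t (desc_refl t)). apply Hf; simpl; auto.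
Qed.

Lemma var_right : forall G n, In (Var n) G -> G4iSLt G (Var n).
Proof. intros G n H. destruct (in_perm _ _ H) as [G0 HP]. eapply IdP; eauto. Qed.

Lemma bot_left : forall G c, In Bot G -> G4iSLt G c.
Proof. intros G c H. destruct (in_perm _ _ H) as [G0 HP]. eapply BotL; eauto. Qed.

Definition admissible_child (G : list form) (k : bool * tree) : Prop :=
  monotone (snd k) /\ (forall X, In X G -> ~ is_boxed X -> force (snd k) X) /\
  (forall A, In (Box A) G -> force (snd k) (if fst k then A else Box A)).

(** Irreducible implications need a child falsifying their antecedent. *)
Definition needs_witness (X : form) : Prop :=
  match X with Imp (Imp _ _) _ | Imp (Box _) _ => True | _ => False end.

Definition witness (X : form) (k : bool * tree) : Prop :=
  match X with
  | Imp (Imp a b) _ => force (snd k) a /\ ~ force (snd k) b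
  | Imp (Box a) _ => fst k = true /\ ~ force (snd k) a
  | _ => True
  end.

(** For [(a -> b) -> Z] in an undecided [G => c]: the premise [Z, G0 => c] of
    ->->L cannot be refuted (else so would be [G => c]), so the other premise
    [a, b -> Z, G0 => b] is refuted; its countermodel is a witness child. *)
Lemma impimp_witness : forall G c a b Z, decided_below G c -> ~ G4iSLt G c ->
  ~ countermodel G c -> In (Imp (Imp a b) Z) G ->
  exists k, admissible_child G k /\ witness (Imp (Imp a b) Z) k.
Proof.
  intros G c a b Z IH HnG Hncm HX. destruct (in_perm _ _ HX) as [G0 HP].
  destruct (IH (Z :: G0) c) as [HZ|HZ].
  { pose proof (pow4_lt (weight Z) (weight a + weight b + 1 + weight Z + 1)).
    rewrite (seq_weight_perm _ _ _ HP). weight_lia. }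
  - destruct (IH (a :: Imp b Z :: G0) b) as [Hb|[t [Hm [Hf Hn]]]].
    { pose proof (weight_pos a).
      pose proof (pow4_sum3_lt (weight a) (weight b + weight Z + 1) (S (weight b))
                               (weight a + weight b + 1 + weight Z + 1)).
      rewrite (seq_weight_perm _ _ _ HP). weight_lia. }
    + exfalso. apply HnG. eapply ImpImpL; eauto. apply ImpR; auto.
    + exists (false, t). split; [split; [auto|split]|split; [apply Hf; simpl|]; auto].
      * intros Y HY _. apply (Permutation_in _ HP) in HY as [<-|HY]; [|apply Hf; simpl; auto].
        intros u Hu Hab.
        assert (Hu_a : force u a) by (apply (persist a t u); auto; apply Hf; simpl; auto).
        apply (Hf (Imp b Z) (or_intror (or_introl eq_refl)) u Hu).
        apply (Hab u (desc_refl u) Hu_a).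
      * intros A HA. apply (Permutation_in _ HP) in HA as [HA|HA]; [discriminate|].
        apply Hf; simpl; auto.
  - exfalso. apply Hncm. revert HZ. apply countermodel_transfer; auto.
    intros t Hm Hf Y HY. apply (Permutation_in _ HP) in HY as [<-|HY]; [|apply Hf; simpl; auto].
    intros u Hu _. apply (persist Z t u); auto. apply Hf; simpl; auto.
Qed.

(** For [Box a -> Z] likewise with the rule Box->L: the countermodel of its
    first premise becomes a witness child behind a modal edge. *)
Lemma boximp_witness : forall G c a Z, decided_below G c -> ~ G4iSLt G c ->
  ~ countermodel G c -> In (Imp (Box a) Z) G ->
  exists k, admissible_child G k /\ witness (Imp (Box a) Z) k.
Proof.
  intros G c a Z IH HnG Hncm HX. destruct (in_perm _ _ HX) as [G0 HP].
  set (Phi := nonboxed G0). set (D := unboxed G0).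
  assert (HP' : Permutation G (Phi ++ map Box D ++ [Imp (Box a) Z])).
  { eapply Permutation_trans; [apply HP|]. rewrite app_assoc.
    eapply Permutation_trans; [apply Permutation_cons_append|].
    apply Permutation_app_tail, nonboxed_perm. }
  assert (Hw := list_weight_split G0). assert (HwD := list_weight_box D).
  destruct (IH (Phi ++ map Box D ++ [Z]) c) as [HZ|HZ].
  { rewrite (seq_weight_perm _ _ _ HP). unfold seq_weight. rewrite !list_weight_app.
    cbn [list_weight weight].
    pose proof (pow4_lt (weight Z) (weight a + 1 + weight Z + 1)). fold Phi D in Hw. lia. }
  - destruct (IH (Phi ++ D ++ [Z; Box a]) a) as [Ha|[t [Hm [Hf Hn]]]].
    { rewrite (seq_weight_perm _ _ _ HP). unfold seq_weight. rewrite !list_weight_app.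
      cbn [list_weight weight]. pose proof (weight_pos Z).
      pose proof (pow4_sum3_lt (weight Z) (weight a + 1) (S (weight a))
                               (weight a + 1 + weight Z + 1)). fold Phi D in Hw. lia. }
    + exfalso. apply HnG. eapply BoxImpL; eauto. apply nonboxed_no_boxed.
    + exists (true, t). split; [split; [auto|split]|split; auto].
      * intros Y HY HnB. apply (Permutation_in _ HP) in HY as [<-|HY].
        -- intros u Hu _. apply (persist Z t u); auto. apply Hf.
           rewrite !in_app_iff; simpl; auto.
        -- apply Hf, in_app_iff; left. apply in_nonboxed; auto.
      * intros A HA. apply (Permutation_in _ HP) in HA as [HA|HA]; [discriminate|].
        apply Hf, in_app_iff; right; apply in_app_iff; left. apply in_unboxed; auto.
  - exfalso. apply Hncm. revert HZ. apply countermodel_transfer; auto.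
    intros t Hm Hf Y HY. apply (Permutation_in _ HP') in HY.
    rewrite !in_app_iff in HY. destruct HY as [HY|[HY|[<-|[]]]].
    + apply Hf, in_app_iff; auto.
    + apply Hf; rewrite !in_app_iff; auto.
    + intros u Hu _. apply (persist Z t u); auto. apply Hf. rewrite !in_app_iff; simpl; auto.
Qed.

Lemma finite_choice : forall (A B : Type) (P : A -> Prop) (I : B -> Prop)
  (Q : A -> B -> Prop) (l : list A),
  (forall x, In x l -> P x -> exists y, I y /\ Q x y) ->
  exists ys, (forall y, In y ys -> I y) /\
             (forall x, In x l -> P x -> exists y, In y ys /\ Q x y).
Proof.
  intros A B P I Q. induction l as [|a l IH]; intros H.
  - exists []. split; intros; simpl in *; tauto.
  - destruct IH as [ys [HI HQ]]; [intros; apply H; simpl; auto|].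
    destruct (classic (P a)) as [Pa|nPa].
    + destruct (H a (or_introl eq_refl) Pa) as [y [Iy Qy]]. exists (y :: ys). split.
      * intros y' [<-|Hy']; auto.
      * intros x [<-|Hx] Px; [exists y; simpl; auto|].
        destruct (HQ x Hx Px) as [y' [? ?]]. exists y'; simpl; auto.
    + exists ys. split; auto. intros x [<-|Hx] Px; [contradiction | auto].
Qed.

Lemma antecedent_witnesses : forall G c, decided_below G c -> ~ G4iSLt G c ->
  ~ countermodel G c -> exists ks, (forall k, In k ks -> admissible_child G k) /\
  (forall X, In X G -> needs_witness X -> exists k, In k ks /\ witness X k).
Proof.
  intros G c IH HnG Hncm. apply finite_choice. intros X HX Hneed.
  destruct X as [| | | |Y Z|]; try contradiction.
  destruct Y; try contradiction.
  - eapply impimp_witness; eauto.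
  - eapply boximp_witness; eauto.
Qed.

Definition refutes_succ (c : form) (ks : list (bool * tree)) : Prop :=
  match c with
  | Var _ | Bot => True
  | Or a b => (exists k, In k ks /\ ~ force (snd k) a) /\
              (exists k, In k ks /\ ~ force (snd k) b)
  | Box a => exists t, In (true, t) ks /\ ~ force t a
  | _ => False
  end.

(** Antecedent formulas and succedents to which no invertible rule applies. *)
Definition irreducible_ant (G : list form) (X : form) : Prop :=
  match X with
  | Var _ | Box _ => True
  | Imp (Var n) _ => ~ In (Var n) G
  | Imp Bot _ | Imp (Imp _ _) _ | Imp (Box _) _ => True
  | _ => False
  end.

Definition irreducible_succ (G : list form) (c : form) : Prop :=
  match c with
  | Var n => ~ In (Var n) G
  | Bot | Or _ _ | Box _ => True
  | _ => False
  end.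

Lemma succedent_witnesses : forall G c, decided_below G c -> ~ G4iSLt G c ->
  irreducible_succ G c ->
  exists ks, (forall k, In k ks -> admissible_child G k) /\ refutes_succ c ks.
Proof.
  intros G c IH HnG Hirr. destruct c as [n| |a b|a b|a b|a]; try contradiction.
  - exists []. split; simpl; tauto.
  - exists []. split; simpl; tauto.
  - destruct (IH G a) as [Ha|[ta [Hma [Hfa Hna]]]].
    { pose proof (pow4_lt (S (weight a)) (S (weight a + weight b + 1))). weight_lia. }
    { exfalso; apply HnG, OrR1; auto. }
    destruct (IH G b) as [Hb|[tb [Hmb [Hfb Hnb]]]].
    { pose proof (pow4_lt (S (weight b)) (S (weight a + weight b + 1))). weight_lia. }
    { exfalso; apply HnG, OrR2; auto. }
    exists [(false, ta); (false, tb)]. split.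
    + intros k [<-|[<-|[]]]; (split; [auto|split]); simpl; intros A HA; auto.
      * apply (Hfa (Box A) HA).
      * apply (Hfb (Box A) HA).
    + split; [exists (false, ta) | exists (false, tb)]; simpl; auto.
  - assert (HP := nonboxed_perm G).
    assert (Hw := list_weight_split G). assert (HwD := list_weight_box (unboxed G)).
    destruct (IH (nonboxed G ++ unboxed G ++ [Box a]) a) as [Ha|[t [Hm [Hf Hn]]]].
    { unfold seq_weight. rewrite !list_weight_app. cbn [list_weight weight].
      pose proof (pow4_sum2_lt (weight a + 1) (S (weight a)) (S (weight a + 1))). lia. }
    { exfalso. apply HnG. eapply SLtR; eauto. apply nonboxed_no_boxed. }
    exists [(true, t)]. split; [|exists t; simpl; auto].
    intros k [<-|[]]. split; [auto|split]; simpl.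
    + intros X HX HnB. apply Hf, in_app_iff; left; apply in_nonboxed; auto.
    + intros A HA. apply Hf, in_app_iff; right; apply in_app_iff; left; apply in_unboxed; auto.
Qed.

Lemma desc_node_inv : forall l ks u, desc (Node l ks) u ->
  u = Node l ks \/ exists b t, In (b, t) ks /\ desc t u.
Proof.
  intros l ks u H. inversion H as [|? t ? [b Hb] Hd]; subst; auto.
  right. exists b, t; auto.
Qed.

Lemma modal_node_inv : forall l ks v, modal (Node l ks) v ->
  (exists t, In (true, t) ks /\ desc t v) \/ (exists b t, In (b, t) ks /\ modal t v).
Proof.
  intros l ks v H. inversion H; subst; [left; eauto | right; eauto].
Qed.

(** The countermodel of an irreducible sequent [G => c]: a root forcing
    exactly the variables of [G], above admissible children. *)
Section Root.

Variable G : list form.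
Variable ks : list (bool * tree).
Hypothesis children_admissible : forall k, In k ks -> admissible_child G k.

Let root := Node (vars G) ks.

Lemma root_monotone : monotone root.
Proof.
  intros u c Hu Hc n Hn. destruct (desc_node_inv _ _ _ Hu) as [->|[b [t [Hin Hd]]]].
  - destruct Hc as [b Hb]. destruct (children_admissible _ Hb) as [_ [Hf _]].
    apply (Hf (Var n)); [apply vars_iff; auto | simpl; auto].
  - destruct (children_admissible _ Hin) as [Hm _]. apply (Hm u c Hd Hc n Hn).
Qed.

Lemma root_child_persist : forall b t A, In (b, t) ks -> force root A -> force t A.
Proof.
  intros b t A Hin HA. apply (persist A root t root_monotone); auto.
  apply desc_step with t; [exists b; auto | constructor].
Qed.

(** An implication of [G] whose antecedent fails at the root is forced:
    above the root it is forced by the admissible children. *)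
Lemma root_forces_imp : forall Y Z, In (Imp Y Z) G -> ~ force root Y -> force root (Imp Y Z).
Proof.
  intros Y Z HX HnY u Hu HY. destruct (desc_node_inv _ _ _ Hu) as [->|[b [t [Hin Hd]]]].
  - contradiction.
  - destruct (children_admissible _ Hin) as [Hm [Hf _]].
    apply (persist (Imp Y Z) t u Hm Hd (Hf _ HX (fun x => x)) u (desc_refl u) HY).
Qed.

(** Boxed members of [G] are forced: their bodies hold behind modal edges,
    and their boxes (hence their bodies, further up) behind plain edges. *)
Lemma root_forces_box : forall A, In (Box A) G -> force root (Box A).
Proof.
  intros A HA v Hv. destruct (modal_node_inv _ _ _ Hv) as [[t [Hin Hd]]|[b [t [Hin Hm']]]].
  - destruct (children_admissible _ Hin) as [Hm [_ Hb]]. apply (persist A t v Hm Hd (Hb A HA)).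
  - destruct (children_admissible _ Hin) as [Hm [_ Hb]]. specialize (Hb A HA).
    destruct b; [apply (force_box_of A t Hm Hb v Hm') | apply (Hb v Hm')].
Qed.

(** Every irreducible member of [G] is forced at the root: variables by
    construction, implications vacuously, since their antecedent fails. *)
Lemma root_forces_antecedent :
  (forall X, In X G -> needs_witness X -> exists k, In k ks /\ witness X k) ->
  forall X, In X G -> irreducible_ant G X -> force root X.
Proof.
  intros Hwit X HX Hirr. destruct X as [n| |a b|a b|Y Z|A]; try contradiction.
  - apply vars_iff; auto.
  - apply root_forces_imp; auto.
    destruct Y as [n| |a b|a b|a b|a]; try contradiction.
    + intros Hn. apply Hirr, vars_iff; auto.
    + simpl; tauto.
    + intros Hab. destruct (Hwit _ HX I) as [[b0 t] [Hin [Ha Hnb]]].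
      apply Hnb. apply (root_child_persist _ _ _ Hin Hab t (desc_refl t) Ha).
    + intros Ha. destruct (Hwit _ HX I) as [[b0 t] [Hin [Hb0 Hna]]]. simpl in Hb0; subst b0.
      apply Hna, Ha. eapply modal_edge; [exact Hin | constructor].
  - apply root_forces_box; auto.
Qed.

Lemma root_refutes_succ : forall c, refutes_succ c ks -> irreducible_succ G c -> ~ force root c.
Proof.
  intros c Hc Hirr. destruct c as [n| |a b|a b|a b|a]; try contradiction.
  - intros Hn. apply Hirr, vars_iff; auto.
  - simpl; auto.
  - destruct Hc as [[[b1 t1] [Hin1 Hn1]] [[b2 t2] [Hin2 Hn2]]].
    intros [Ha|Hb]; [apply Hn1 | apply Hn2]; eapply root_child_persist; eauto.
  - destruct Hc as [t [Hin Hn]]. intros H. apply Hn, H.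
    eapply modal_edge; [exact Hin | constructor].
Qed.

End Root.

Lemma refutes_succ_app : forall c ks1 ks2, refutes_succ c ks2 -> refutes_succ c (ks1 ++ ks2).
Proof.
  intros c ks1 ks2 H. destruct c; simpl in *; auto.
  - destruct H as [[k1 [H1 H1']] [k2 [H2 H2']]].
    split; [exists k1 | exists k2]; rewrite in_app_iff; auto.
  - destruct H as [t [Hin Hn]]. exists t. rewrite in_app_iff; auto.
Qed.

Lemma irreducible_decided : forall G c, decided_below G c ->
  (forall X, In X G -> irreducible_ant G X) -> irreducible_succ G c -> decided G c.
Proof.
  intros G c IH Hant Hsucc.
  destruct (classic (G4iSLt G c)) as [H|HnG]; [left; auto | right].
  destruct (classic (countermodel G c)) as [H|Hncm]; [auto|].
  destruct (antecedent_witnesses G c IH HnG Hncm) as [ks1 [Hadm1 Hwit]].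
  destruct (succedent_witnesses G c IH HnG Hsucc) as [ks2 [Hadm2 Hrefute]].
  assert (Hadm : forall k, In k (ks1 ++ ks2) -> admissible_child G k)
    by (intros k Hk; apply in_app_iff in Hk as [Hk|Hk]; auto).
  exists (Node (vars G) (ks1 ++ ks2)). split; [|split].
  - apply root_monotone; auto.
  - intros X HX. apply root_forces_antecedent; auto. intros Y HY Hneed.
    destruct (Hwit Y HY Hneed) as [k [Hk Hw]]. exists k. rewrite in_app_iff; auto.
  - apply root_refutes_succ; auto. apply refutes_succ_app; auto.
Qed.

Lemma provable_or_countermodel : forall G c, decided G c.
Proof.
  intros G c. remember (seq_weight G c) as w. revert G c Heqw.
  induction w as [w IHw] using lt_wf_ind. intros G c ->.
  assert (IH : decided_below G c) by (intros G' c' Hlt; eapply IHw; eauto).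
  destruct (classic (exists X, In X G /\ ~ irreducible_ant G X)) as [[X [HX Hred]]|Hirr].
  - destruct X as [n| |a b|a b|Y Z|a]; simpl in Hred; try tauto.
    + left; apply bot_left; auto.
    + eapply decide_and_left; eauto.
    + eapply decide_or_left; eauto.
    + destruct Y; try tauto.
      * apply NNPP in Hred. eapply decide_var_imp_left; eauto.
      * eapply decide_and_imp_left; eauto.
      * eapply decide_or_imp_left; eauto.
  - assert (Hant : forall X, In X G -> irreducible_ant G X)
      by (intros X HX; apply NNPP; intro H; apply Hirr; eauto).
    destruct c as [n| |a b|a b|a b|a].
    + destruct (classic (In (Var n) G)); [left; apply var_right; auto|].
      apply irreducible_decided; auto.
    + apply irreducible_decided; simpl; auto.
    + apply decide_and_right; auto.
    + apply irreducible_decided; simpl; auto.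
    + apply decide_imp_right; auto.
    + apply irreducible_decided; simpl; auto.
Qed.

Theorem mainTheorem2 : forall phi : form,
  iSLH empty_set phi <-> G4iSLt [] phi.
Proof.
  intros phi. split.
  - intros H. destruct (provable_or_countermodel [] phi) as [Hp|[t [Hm [_ Hn]]]]; auto.
    exfalso. apply Hn. apply (iSLH_sound _ _ H); [intros x [] | auto].
  - intros H. eapply iSLH_mono; [apply G4iSLt_sound, H | intros x []].
Qed.
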